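(* Let $V$ be the set of the $v=280$ partitions of $\{1,\ldots,9\}$ into three cells each of size three. For partitions $\pi,\sigma\in V$ let $\pi\wedge\sigma$ denote their meet (the partition whose cells are the nonempty intersections of a cell of $\pi$ with a cell of $\sigma$). Define $280\times280$ $0/1$-matrices $A_0=I$ and $A_1,A_2,A_3,A_4$ by: $(A_1)_{\pi\sigma}=1$ iff $\pi\wedge\sigma$ has $9$ cells, $(A_2)_{\pi\sigma}=1$ iff it has $7$ cells, $(A_3)_{\pi\sigma}=1$ iff it has $6$ cells, $(A_4)_{\pi\sigma}=1$ iff it has $5$ cells. Let $v_0=1,v_1=36,v_2=162,v_3=54,v_4=27$ be the respective row sums. Let $\mathcal{P}(3^3)$ be the graph with adjacency matrix $A_1$. Let $E_0=\frac1{280}J$ (with $J$ the all-ones matrix) and let $E_1$ be the orthogonal projection onto the eigenspace of $A_1$ for the eigenvalue $-12$. Suppose $x$ is the characteristic vector of an independent set of $\mathcal{P}(3^3)$ of size $70$. Then \[ \sum_{i=0}^4\frac{x^TA_ix}{v\,v_i}A_i=\frac14I+\frac1{18}A_2+\frac1{12}A_3+\frac5{36}A_4=\frac{70}{4}E_0+\frac{70}{36}E_1 . \]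
   Context: The matrices $A_0,\ldots,A_4$ form a symmetric association scheme; two partitions are adjacent in $\mathcal{P}(3^3)$ precisely when each cell of one contains exactly one point from each cell of the other, i.e. when their meet has 9 cells. The eigenspace of $A_1$ for $-12$ has dimension 27. *)

From HB Require Import structures.
From mathcomp Require Import all_boot all_order all_algebra.
Set Implicit Arguments. Unset Strict Implicit. Unset Printing Implicit Defensive.
Import Order.TTheory GRing.Theory Num.Theory.

Definition is_part33 (P : {set {set 'I_9}}) : bool :=
  [&& partition P [set: 'I_9], #|P| == 3 & [forall B in P, #|B| == 3]].

Definition part33 := {P : {set {set 'I_9}} | is_part33 P}.

Definition meet_ncells (p q : part33) : nat :=
  #|[set A :&: B | A in val p, B in val q] :\ set0|.

Definition adj33 (p q : part33) : bool := meet_ncells p q == 9.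

Definition independent33 (S : {set part33}) : bool :=
  [forall p in S, forall q in S, ~~ adj33 p q].

Local Open Scope ring_scope.

Notation nV := #|{: part33}|.
Definition vtx (i : 'I_nV) : part33 := enum_val i.

Definition meetmx (R : nzRingType) (c : nat) : 'M[R]_nV :=
  \matrix_(i, j) (meet_ncells (vtx i) (vtx j) == c)%:R.

Definition Amx (R : nzRingType) (k : nat) : 'M[R]_nV :=
  match k with
  | 0 => 1%:M
  | 1 => meetmx R 9
  | 2 => meetmx R 7
  | 3 => meetmx R 6
  | _ => meetmx R 5
  end.

Definition vval (k : nat) : nat :=
  match k with 0 => 1 | 1 => 36 | 2 => 162 | 3 => 54 | _ => 27 end%N.

Definition orthoproj (R : realFieldType) (n : nat) (U : 'M[R]_n) : 'M[R]_n :=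
  let B := row_base U in B^T *m invmx (B *m B^T) *m B.

Definition E0 (R : realFieldType) : 'M[R]_nV := (280%:R)^-1 *: const_mx 1.
Definition E1 (R : realFieldType) : 'M[R]_nV :=
  orthoproj (eigenspace (Amx R 1) (-12)).

Definition charvec (R : nzRingType) (S : {set part33}) : 'cV[R]_nV :=
  \col_i (vtx i \in S)%:R.

(* The 280 partitions are coded by canonical label strings (a point is labelled by the
   rank of its cell in order of first occurrence), so the relation between any two
   partitions (the number of cells of their meet) and the intersection numbers
   p^t_1k = #{h | h ~ a, type(h, b) = k}, for type(a, b) = t, are checked by computation.
   The intersection numbers force every eigenvector of A_1 for theta_j to be an
   eigenvector of A_k for P_j(k), and then E_j = (m_j / 280) sum_k P_j(k) / v_k A_k is the
   orthogonal projection onto that eigenspace, where (theta_j) = (36, -12, -4, 2, 8) and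
   (m_j) = (1, 27, 84, 120, 48).  For the characteristic vector x of an independent set
   of size 70, the numbers q_j = x^T E_j x are nonnegative, q_0 = 70^2 / 280,
   sum_j q_j = x^T x = 70 and sum_j theta_j q_j = x^T A_1 x = 0.  These force
   q_1 = 105/2 and q_2 = q_3 = q_4 = 0 (the ratio bound is attained), so
   x^T A_k x = P_0(k) q_0 + P_1(k) q_1, and both identities follow entrywise. *)

From HB Require Import structures.
From mathcomp Require Import all_boot all_order all_algebra.
From mathcomp Require Import ring lra.
Set Implicit Arguments. Unset Strict Implicit. Unset Printing Implicit Defensive.
Import Order.TTheory GRing.Theory Num.Theory.

Lemma size_undup_map_kernel (I T U : eqType) (h : I -> T) (k : I -> U) (l : seq I) :
  (forall x y, (h x == h y) = (k x == k y)) ->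
  size (undup (map h l)) = size (undup (map k l)).
Proof.
move=> hk; elim: l => [|a l IHl] //=.
have -> : (h a \in map h l) = (k a \in map k l).
  by apply/mapP/mapP => -[y yl /eqP]; [rewrite hk | rewrite -hk] => /eqP; exists y.
by case: ifP => _ //=; rewrite IHl.
Qed.

Section PreimPartition.
Variable T : finType.

Lemma preim_partition_kernel (U V : eqType) (f : T -> U) (g : T -> V) (D : {set T}) :
  (forall x y, (f x == f y) = (g x == g y)) -> preim_partition f D = preim_partition g D.
Proof.
by move=> fg; apply: eq_imset => x; apply/setP => y; rewrite !inE fg.
Qed.

Lemma card_preim_partition (U : eqType) (f : T -> U) :
  #|preim_partition f [set: T]| = size (undup [seq f x | x <- enum T]).
Proof.
have card_undup (s : seq {set T}) : #|undup s| = size (undup s).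
  exact/card_uniqP/undup_uniq.
rewrite imset_card -(eq_card (mem_undup _)) card_undup /image_mem enum_setT -enumT.
apply: size_undup_map_kernel => x y; apply/eqP/eqP => [Pxy | fxy].
  by have := congr1 (fun B : {set T} => y \in B) Pxy; rewrite !inE eqxx => /eqP.
by apply/setP => z; rewrite !inE fxy.
Qed.

Lemma preim_partition_meet (U V : eqType) (f : T -> U) (g : T -> V) :
  [set A :&: B | A in preim_partition f [set: T], B in preim_partition g [set: T]] :\ set0
  = preim_partition (fun x => (f x, g x)) [set: T].
Proof.
have blockI x : [set y in [set: T] | f x == f y] :&: [set y in [set: T] | g x == g y]
             = [set y in [set: T] | (f x, g x) == (f y, g y)].
  by apply/setP => y; rewrite !inE xpair_eqE.
apply/setP => C; rewrite in_setD1; apply/andP/imsetP => [[C0] | [x _ ->]].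
  case/imset2P=> _ _ /imsetP[a _ ->] /imsetP[b _ ->] defC; subst C.
  case/set0Pn: C0 => z; rewrite !inE => /andP[/eqP az /eqP bz].
  by exists z => //; apply/setP => y; rewrite !inE az bz xpair_eqE.
split; first by apply/set0Pn; exists x; rewrite !inE eqxx.
by apply/imset2P; exists [set y in [set: T] | f x == f y] [set y in [set: T] | g x == g y];
  rewrite ?blockI ?imset_f.
Qed.

End PreimPartition.

Definition lab (s : seq nat) (x : 'I_9) : nat := nth 0 s x.
Definition decode (s : seq nat) : {set {set 'I_9}} := preim_partition (lab s) [set: 'I_9].

Definition labels33 (s : seq nat) : bool :=
  [&& size s == 9, size (undup s) == 3 & all (fun c => count_mem c s == 3) s].

Definition meet_size (s t : seq nat) : nat := size (undup (zip s t)).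

Lemma map_lab s : size s = 9 -> [seq lab s x | x <- enum 'I_9] = s.
Proof.
by move=> s9; rewrite /lab (map_comp (nth 0 s) val) val_enum_ord -s9 -/(mkseq _ _) mkseq_nth.
Qed.

Lemma map_lab2 s t : size s = 9 -> size t = 9 ->
  [seq (lab s x, lab t x) | x <- enum 'I_9] = zip s t.
Proof.
move=> s9 t9; apply: (@eq_from_nth _ (0, 0)%N) => [|i]; rewrite size_map size_enum_ord.
  by rewrite size_zip s9 t9.
move=> lti; rewrite nth_zip ?s9 ?t9 // (nth_map (Ordinal lti)) ?size_enum_ord //.
by rewrite /lab nth_enum_ord.
Qed.

Lemma card_decode s : size s = 9 -> #|decode s| = size (undup s).
Proof. by move=> s9; rewrite card_preim_partition map_lab. Qed.

Lemma card_decode_block s x : size s = 9 ->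
  #|[set y in [set: 'I_9] | lab s x == lab s y]| = count_mem (lab s x) s.
Proof.
move=> s9; move: (lab s x) => c.
rewrite -{2}(map_lab s9) count_map enumT cardsE cardE /enum_mem size_filter.
by apply: eq_count => y; rewrite /= unfold_in /= in_setT eq_sym.
Qed.

Lemma is_part33_decode s : size s = 9 -> is_part33 (decode s) = labels33 s.
Proof.
move=> s9; rewrite /is_part33 /labels33 preim_partitionP card_decode // s9 eqxx /=.
congr (_ && _); apply/forall_inP/allP => [blocks3 c | counts3 _ /imsetP[x _ ->]].
  case/(nthP 0) => i; rewrite s9 => lti <-.
  by rewrite -[nth 0 s i]/(lab s (Ordinal lti)) -card_decode_block // blocks3 ?imset_f.
by rewrite card_decode_block // counts3 // /lab mem_nth ?s9.
Qed.

Definition canon (s : seq nat) : seq nat := [seq index a (undup s) | a <- s].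

Lemma decode_canon s : size s = 9 -> decode (canon s) = decode s.
Proof.
move=> s9; apply: preim_partition_kernel => x y.
have labE z : lab (canon s) z = index (lab s z) (undup s).
  by rewrite /lab (nth_map 0) ?s9.
have mem_lab z : lab s z \in undup s by rewrite mem_undup mem_nth ?s9.
by rewrite !labE; apply/eqP/eqP => [/(index_inj 0 (mem_lab x) (mem_lab y)) | ->].
Qed.

Fixpoint words3 (n : nat) : seq (seq nat) :=
  if n is n'.+1 then [seq c :: w | c <- iota 0 3, w <- words3 n'] else [:: [::]].

Lemma mem_words3 s : all (fun c => c < 3) s -> s \in words3 (size s).
Proof.
elim: s => [|c s IHs] //= /andP[c3 /IHs s_w].
by case: c c3 => [|[|[|]]] // _; rewrite !mem_cat (map_f _ s_w) ?orbT.
Qed.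

(* Locked: unification must never try to evaluate this enumeration. *)
Fact codes33_key : unit. Proof. by []. Qed.
Definition codes33 : seq (seq nat) :=
  locked_with codes33_key (undup [seq canon s | s <- words3 9 & labels33 s]).
Canonical codes33_unlockable := [unlockable of codes33].

Lemma codes33_part33 h : h \in codes33 -> size h = 9 /\ is_part33 (decode h).
Proof.
rewrite [codes33]unlock mem_undup => /mapP[s]; rewrite mem_filter => /andP[s33 _] ->.
have s9 : size s = 9 by case/and3P: s33 => /eqP.
by rewrite size_map decode_canon // is_part33_decode.
Qed.

Section CodeOfPartition.
Variable P : {set {set 'I_9}}.
Hypothesis partP : partition P [set: 'I_9].

Definition code_of : seq nat := [seq index (pblock P x) (enum P) | x <- enum 'I_9].

Lemma size_code_of : size code_of = 9.
Proof. by rewrite size_map size_enum_ord. Qed.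

Lemma lab_code_of x : lab code_of x = index (pblock P x) (enum P).
Proof. by rewrite /lab (nth_map x) ?size_enum_ord // nth_ord_enum. Qed.

Lemma decode_code_of : decode code_of = P.
Proof.
rewrite -[RHS](preim_partition_pblock partP); apply: preim_partition_kernel => x y.
have blockP z : pblock P z \in enum P.
  by rewrite mem_enum pblock_mem // (cover_partition partP).
by rewrite !lab_code_of; apply/eqP/eqP => [/(index_inj set0 (blockP x) (blockP y)) | ->].
Qed.

Lemma code_of_lt (n : nat) : #|P| = n -> all (fun c => c < n) code_of.
Proof.
move=> cardP; apply/allP => _ /mapP[x _ ->].
by rewrite -cardP cardE index_mem mem_enum pblock_mem // (cover_partition partP).
Qed.

End CodeOfPartition.

(* Entry k is the meet size of the pairs related by A_k; for A_0 = I, the meet of a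
   partition with itself has 3 cells. *)
Definition meet_classes : seq nat := [:: 3; 9; 7; 6; 5].
Definition meet_type (s t : seq nat) : nat := index (meet_size s t) meet_classes.

(* Row t, column k: the number of h adjacent to a with meet_type h b = k, whenever
   meet_type a b = t. *)
Definition isect_table : seq (seq nat) :=
  [:: [:: 0; 36; 0; 0; 0]; [:: 1; 2; 18; 6; 9]; [:: 0; 4; 20; 8; 4];
      [:: 0; 4; 24; 8; 0]; [:: 0; 12; 24; 0; 0]].

Definition type_counts (z : seq nat) : seq nat :=
  foldr (fun t v => incr_nth v t) (nseq 5 0) z.

(* [rows] is let-bound so that even lazy kernel reduction builds the table of meet types
   only once. *)
Definition scheme_ok_on (cs : seq (seq nat)) : bool :=
  let rows := [seq (b, [seq meet_type b h | h <- cs]) | b <- cs] in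
  all (fun ar => let adj := [seq t == 1 | t <- ar.2] in
    all (fun tbr => let: (t, (b, rb)) := tbr in
      [&& t < 5, (t == 0) == (ar.1 == b)
        & type_counts (mask adj rb) == nth [::] isect_table t])
    (zip ar.2 rows)) rows.

Lemma codes33_scheme_ok : scheme_ok_on codes33.
Proof. by rewrite [codes33]unlock; vm_compute. Qed.

Lemma meet_sizeC s t : meet_size s t = meet_size t s.
Proof.
rewrite /meet_size; have -> : zip t s = [seq (m.2, m.1) | m <- zip s t].
  by elim: s t => [|x s IHs] [|y t] //=; rewrite IHs.
rewrite -{1}(map_id (zip s t)); apply: size_undup_map_kernel.
by move=> [x1 y1] [x2 y2]; rewrite !xpair_eqE andbC.
Qed.

Lemma meet_typeC s t : meet_type s t = meet_type t s.
Proof. by rewrite /meet_type meet_sizeC. Qed.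

Lemma card_meet_decode s t : size s = 9 -> size t = 9 ->
  #|[set A :&: B | A in decode s, B in decode t] :\ set0| = meet_size s t.
Proof. by move=> s9 t9; rewrite preim_partition_meet card_preim_partition map_lab2. Qed.

Lemma nth_type_counts z k : nth 0 (type_counts z) k = count_mem k z.
Proof.
elim: z => [|t z IHz]; first exact: etrans (nth_nseq _ _ _ _) (if_same _ _).
by rewrite /= nth_incr_nth -IHz.
Qed.

Lemma meet_type_scheme_ok cs a b : scheme_ok_on cs -> a \in cs -> b \in cs ->
  [/\ meet_type a b < 5, (meet_type a b == 0) = (a == b)
    & forall k, count (fun h => (meet_type a h == 1) && (meet_type h b == k)) cs
                = nth 0 (nth [::] isect_table (meet_type a b)) k].
Proof.
pose row x := [seq meet_type x h | h <- cs].
move=> /allP/(_ (a, row a) (map_f _ _)) ok a_c b_c; move: (ok a_c).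
rewrite /= zip_map => /allP/(_ _ (map_f (fun b => (meet_type a b, (b, row b))) b_c)).
case/and3P=> t5 /eqP t0 /eqP cnt; split=> // k.
rewrite -cnt nth_type_counts /row -map_comp -map_mask -filter_mask.
rewrite count_map count_filter; apply: eq_count => h.
by rewrite /= andbC (meet_typeC h b).
Qed.

Lemma meet_type_codes33 a b : a \in codes33 -> b \in codes33 ->
  [/\ meet_type a b < 5, (meet_type a b == 0) = (a == b)
    & forall k, count (fun h => (meet_type a h == 1) && (meet_type h b == k)) codes33
                = nth 0 (nth [::] isect_table (meet_type a b)) k].
Proof. exact: meet_type_scheme_ok codes33_scheme_ok. Qed.

Definition code33 (p : part33) : seq nat := canon (code_of (val p)).

Lemma part33P (p : part33) : partition (val p) [set: 'I_9] /\ #|val p| = 3.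
Proof. by case/and3P: (valP p) => partp /eqP. Qed.

Lemma size_code33 p : size (code33 p) = 9.
Proof. by rewrite size_map size_code_of. Qed.

Lemma decode_code33 p : decode (code33 p) = val p.
Proof. by rewrite decode_canon ?size_code_of // decode_code_of //; case: (part33P p). Qed.

Lemma code33_mem p : code33 p \in codes33.
Proof.
have [partp cardp] := part33P p.
have := mem_words3 (code_of_lt partp cardp); rewrite size_code_of => w9.
rewrite /code33 [codes33]unlock mem_undup; apply: map_f.
rewrite mem_filter w9 andbT -is_part33_decode ?size_code_of // decode_code_of //.
exact: valP p.
Qed.

Lemma meet_ncells_code33 p q : meet_ncells p q = meet_size (code33 p) (code33 q).
Proof.
rewrite /meet_ncells -{1}(decode_code33 p) -{1}(decode_code33 q).
by rewrite card_meet_decode ?size_code33.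
Qed.

Lemma decode_inj_codes33 : {in codes33 &, injective decode}.
Proof.
move=> a b a_c b_c eq_ab; have [sa _] := codes33_part33 a_c; have [sb _] := codes33_part33 b_c.
have [_ aa _] := meet_type_codes33 a_c a_c; have [_ ab _] := meet_type_codes33 a_c b_c.
suff : meet_type a b == 0 by rewrite ab => /eqP.
rewrite /meet_type -(card_meet_decode sa sb) -eq_ab (card_meet_decode sa sa).
by rewrite -/(meet_type a a) aa.
Qed.

Lemma code33_inj : injective code33.
Proof. by move=> p q /(congr1 decode); rewrite !decode_code33 => /val_inj. Qed.

Lemma perm_code33 : perm_eq [seq code33 p | p <- enum {: part33}] codes33.
Proof.
apply: uniq_perm => [|| h]; first by rewrite (map_inj_uniq code33_inj) enum_uniq.
  by rewrite [codes33]unlock undup_uniq.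
case: (boolP (h \in codes33)) => h_c.
  have [_ h33] := codes33_part33 h_c.
  apply/mapP; exists (Sub (decode h) h33 : part33); first by rewrite mem_enum.
  by apply: (decode_inj_codes33 h_c (code33_mem _)); rewrite decode_code33 SubK.
apply/negbTE; apply: contraNN h_c => /mapP[p _ ->]; exact: code33_mem.
Qed.

Lemma sum_part33 (G : seq nat -> nat) :
  \sum_(p : part33) G (code33 p) = \sum_(h <- codes33) G h.
Proof. by rewrite -(perm_big _ perm_code33) big_map big_enum. Qed.

Definition typ33 (i j : 'I_nV) : nat := index (meet_ncells (vtx i) (vtx j)) meet_classes.

Definition isect (t k : nat) : nat := nth 0 (nth [::] isect_table t) k.

Lemma typ33E i j : typ33 i j = meet_type (code33 (vtx i)) (code33 (vtx j)).
Proof. by rewrite /typ33 meet_ncells_code33. Qed.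

Lemma typ33_lt i j : typ33 i j < 5.
Proof.
by rewrite typ33E; case: (meet_type_codes33 (code33_mem (vtx i)) (code33_mem (vtx j))).
Qed.

Lemma typ33C i j : typ33 i j = typ33 j i.
Proof. by rewrite !typ33E meet_typeC. Qed.

Lemma typ33_eq0 i j : (typ33 i j == 0) = (i == j).
Proof.
rewrite typ33E; case: (meet_type_codes33 (code33_mem (vtx i)) (code33_mem (vtx j))) => _ -> _.
by rewrite (inj_eq code33_inj) (inj_eq enum_val_inj).
Qed.

Lemma sum_vtx (F : part33 -> nat) : \sum_(r < nV) F (vtx r) = \sum_(p : part33) F p.
Proof. by rewrite -(big_enum_val _ (A := {: part33})); apply: eq_bigl. Qed.

Lemma count_isect i j k :
  \sum_(r < nV) ((typ33 i r == 1) && (typ33 r j == k) : nat) = isect (typ33 i j) k.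
Proof.
under eq_bigr do rewrite !typ33E.
rewrite typ33E /isect; case: (meet_type_codes33 (code33_mem (vtx i)) (code33_mem (vtx j))) => _ _ <-.
set a := code33 (vtx i); set b := code33 (vtx j).
rewrite (sum_vtx (fun p => (meet_type a (code33 p) == 1) && (meet_type (code33 p) b == k))).
rewrite (sum_part33 (fun h => (meet_type a h == 1) && (meet_type h b == k))).
by rewrite -sum1_count [RHS]big_mkcond; apply: eq_bigr => h _; case: ifP.
Qed.

Local Open Scope ring_scope.

Section RealMatrices.
Variable R : realFieldType.

Lemma mulmx_tr_eq0 m n (X : 'M[R]_(m, n)) : X *m X^T = 0 -> X = 0.
Proof.
move=> XX0; apply/matrixP => i j; rewrite mxE.
have /eqP : (X *m X^T) i i = 0 by rewrite XX0 mxE.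
rewrite mxE psumr_eq0 => [/allP/(_ j (mem_index_enum _))|k _]; rewrite mxE -expr2 ?sqr_ge0 //.
by rewrite sqrf_eq0 => /eqP.
Qed.

Lemma row_free_gram_unit m n (B : 'M[R]_(m, n)) : row_free B -> B *m B^T \in unitmx.
Proof.
move=> freeB; rewrite -row_free_unit -kermx_eq0 -(mulmx_free_eq0 _ freeB).
apply/eqP/mulmx_tr_eq0.
by rewrite trmx_mul mulmxA -(mulmxA _ B) mulmx_ker mul0mx.
Qed.

Lemma quad_idem_ge0 n (E : 'M[R]_n) (x : 'cV[R]_n) :
  E^T = E -> E *m E = E -> 0 <= (x^T *m E *m x) 0 0.
Proof.
move=> ET EE; have -> : x^T *m E *m x = (E *m x)^T *m (E *m x).
  by rewrite trmx_mul ET mulmxA -(mulmxA x^T E E) EE.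
by rewrite mxE; apply: sumr_ge0 => i _; rewrite !mxE -expr2 sqr_ge0.
Qed.

Lemma orthoproj_sym_idem n (U F : 'M[R]_n) :
  F^T = F -> F *m F = F -> (U == F)%MS -> orthoproj U = F.
Proof.
move=> FT FF /eqmxP eqUF; rewrite /orthoproj.
move: (row_base U) (eq_row_base U) (row_base_free U) => B eqBU freeB.
have eqBF : (B :=: F)%MS := eqmx_trans eqBU eqUF.
have BBW : B *m B^T *m invmx (B *m B^T) = 1 by rewrite mulmxV // row_free_gram_unit.
have WT : (invmx (B *m B^T))^T = invmx (B *m B^T) by rewrite trmx_inv trmx_mul trmxK.
move: (invmx _) BBW WT => W BBW WT.
have BF : B *m F = B.
  have /submxP[D ->] : (B <= F)%MS by rewrite eqBF.
  by rewrite -mulmxA FF.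
have FP : F *m (B^T *m W *m B) = F.
  have /submxP[Y ->] : (F <= B)%MS by rewrite eqBF.
  by rewrite !mulmxA -(mulmxA Y B) -(mulmxA Y (B *m B^T)) BBW mulmx1.
have PT : (B^T *m W *m B)^T = B^T *m W *m B by rewrite !trmx_mul trmxK WT mulmxA.
have PF : B^T *m W *m B *m F = B^T *m W *m B by rewrite -mulmxA BF.
by rewrite -PT -PF trmx_mul FT PT FP.
Qed.

End RealMatrices.

Section RelationMatrices.
Variables (R : realFieldType) (n d : nat) (typ : 'I_n -> 'I_n -> nat).
Hypothesis typ_lt : forall i j, (typ i j < d)%N.
Hypothesis typC : forall i j, typ i j = typ j i.

Definition relmx (k : nat) : 'M[R]_n := \matrix_(i, j) (typ i j == k)%:R.
Definition relcomb (c : nat -> R) : 'M[R]_n := \sum_(k < d) c k *: relmx k.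

Lemma relcomb_entry c i j : relcomb c i j = c (typ i j).
Proof.
rewrite summxE (bigD1 (Ordinal (typ_lt i j))) //= big1 => [|k nk].
  by rewrite !mxE eqxx mulr1 addr0.
suff /negbTE tk : typ i j != k by rewrite !mxE tk mulr0.
by apply: contra nk => /eqP tk; apply/eqP/val_inj.
Qed.

Lemma tr_relmx k : (relmx k)^T = relmx k.
Proof. by apply/matrixP => i j; rewrite !mxE typC. Qed.

Lemma tr_relcomb c : (relcomb c)^T = relcomb c.
Proof. by apply/matrixP => i j; rewrite mxE !relcomb_entry typC. Qed.

Lemma mulmx_relcomb m (u : 'M[R]_(m, n)) c :
  u *m relcomb c = \sum_(k < d) c k *: (u *m relmx k).
Proof. by rewrite mulmx_sumr; apply: eq_bigr => k _; rewrite scalemxAr. Qed.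

Variables (a : nat) (p : nat -> nat -> R).
Hypothesis relmx_mul : forall k, (k < d)%N -> relmx a *m relmx k = relcomb (p ^~ k).

Lemma relmx_mul_relcomb c :
  relmx a *m relcomb c = relcomb (fun t => \sum_(k < d) p t k * c k).
Proof.
apply/matrixP => i j; rewrite mulmx_relcomb relcomb_entry summxE.
by apply: eq_bigr => k _; rewrite mxE relmx_mul // relcomb_entry mulrC.
Qed.

Lemma eigenvector_relmx (u : 'rV[R]_n) th : u *m relmx a = th *: u ->
  forall k, (k < d)%N -> th *: (u *m relmx k) = \sum_(t < d) p t k *: (u *m relmx t).
Proof.
by move=> uA k ltkd; rewrite scalemxAl -uA -mulmxA relmx_mul // mulmx_relcomb.
Qed.

Section Idempotent.
Variables (th : R) (c lam : nat -> R).
Hypothesis c_eigen : forall t, (t < d)%N -> \sum_(k < d) p t k * c k = th * c t.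
Hypothesis eigen_relmx : forall u : 'rV[R]_n,
  u *m relmx a = th *: u -> forall k, (k < d)%N -> u *m relmx k = lam k *: u.
Hypothesis c_norm : \sum_(k < d) c k * lam k = 1.

Lemma relcomb_mul_relmx_a : relcomb c *m relmx a = th *: relcomb c.
Proof.
apply: trmx_inj; rewrite trmx_mul tr_relmx !tr_relcomb relmx_mul_relcomb.
by apply/matrixP => i j; rewrite !mxE !relcomb_entry c_eigen // typC.
Qed.

Lemma relcomb_fix (u : 'rV[R]_n) : u *m relmx a = th *: u -> u *m relcomb c = u.
Proof.
move=> uA; rewrite mulmx_relcomb.
under eq_bigr => k _ do rewrite eigen_relmx // scalerA.
by rewrite -scaler_suml c_norm scale1r.
Qed.

Lemma relcomb_mul_relmx k : (k < d)%N -> relcomb c *m relmx k = lam k *: relcomb c.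
Proof.
move=> ltkd; apply/row_matrixP => i; rewrite row_mul linearZ eigen_relmx //=.
by rewrite -row_mul relcomb_mul_relmx_a linearZ.
Qed.

Lemma relmx_mul_relcomb_eig k : (k < d)%N -> relmx k *m relcomb c = lam k *: relcomb c.
Proof.
move=> ltkd; apply: trmx_inj.
by rewrite trmx_mul tr_relmx linearZ /= tr_relcomb relcomb_mul_relmx.
Qed.

Lemma relcomb_idem : relcomb c *m relcomb c = relcomb c.
Proof.
rewrite mulmx_relcomb.
under eq_bigr => k _ do rewrite relcomb_mul_relmx // scalerA.
by rewrite -scaler_suml c_norm scale1r.
Qed.

Lemma orthoproj_eigenspace : orthoproj (eigenspace (relmx a) th) = relcomb c.
Proof.
apply: orthoproj_sym_idem; rewrite ?tr_relcomb ?relcomb_idem //.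
apply/andP; split; apply/row_subP => i.
  have /eigenspaceP rowA := row_sub i (eigenspace (relmx a) th).
  by rewrite -(relcomb_fix rowA) submxMl.
by apply/eigenspaceP; rewrite -row_mul relcomb_mul_relmx_a linearZ.
Qed.

End Idempotent.
End RelationMatrices.

Section Scheme33.
Variable R : realFieldType.
Local Notation A := (relmx R typ33).
Local Notation comb := (relcomb 5 typ33).

Lemma Amx_relmx k : (k < 5)%N -> Amx R k = A k.
Proof.
move=> ltk; apply/matrixP => i j; rewrite [RHS]mxE.
have := typ33_lt i j; rewrite -[5%N]/(size meet_classes) index_mem => cls.
case: k ltk => [_|k ltk].
  by rewrite mxE typ33_eq0.
have -> : Amx R k.+1 = meetmx R (nth 0 meet_classes k.+1).
  by move: ltk; case: k => [|[|[|[|k]]]].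
by rewrite mxE /typ33 -{1}(nth_index 0%N cls) nth_uniq ?index_mem.
Qed.

Lemma relmx33_mul k : (k < 5)%N -> A 1 *m A k = comb (fun t => (isect t k)%:R).
Proof.
move=> ltk; apply/matrixP => i j.
rewrite (relcomb_entry typ33_lt) mxE -count_isect natr_sum.
by apply: eq_bigr => r _; rewrite !mxE -natrM mulnb.
Qed.

Definition eigmx (j k : nat) : R :=
  nth 0 (nth [::] [:: [:: 1; 36; 162; 54; 27]; [:: 1; -12; -6; 6; 11];
    [:: 1; -4; 12; -6; -3]; [:: 1; 2; -6; 6; -3]; [:: 1; 8; -6; -9; 6]] j) k.

Definition eigmult (j : nat) : R := nth 0 [:: 1; 27; 84; 120; 48] j.

Definition idem_coef (j k : nat) : R := eigmult j * eigmx j k / (280 * (vval k)%:R).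

Definition idem33 (j : nat) : 'M[R]_nV := comb (idem_coef j).

Lemma idem_coef_eigen j : (j < 5)%N -> forall t, (t < 5)%N ->
  \sum_(k < 5) (isect t k)%:R * idem_coef j k = eigmx j 1 * idem_coef j t.
Proof.
move=> + t; rewrite !big_ord_recr big_ord0 /=.
by case: j => [|[|[|[|[|]]]]] // _; case: t => [|[|[|[|[|]]]]] // _;
  rewrite /idem_coef /eigmx /eigmult /isect /=; lra.
Qed.

Lemma idem_coef_norm j : (j < 5)%N -> \sum_(k < 5) idem_coef j k * eigmx j k = 1.
Proof.
rewrite !big_ord_recr big_ord0 /=.
by case: j => [|[|[|[|[|]]]]] // _; rewrite /idem_coef /eigmx /eigmult /=; lra.
Qed.

Lemma eigenrow_mul j : (j < 5)%N ->
  forall u : 'rV[R]_nV, u *m A 1 = eigmx j 1 *: u ->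
  forall k, (k < 5)%N -> u *m A k = eigmx j k *: u.
Proof.
move=> ltj u uA k ltk; apply/rowP => c; rewrite [RHS]mxE.
have eq_k k' : (k' < 5)%N ->
    eigmx j 1 * (u *m A k') 0 c = \sum_(t < 5) (isect t k')%:R * (u *m A t) 0 c.
  move=> ltk'.
  have := congr1 (fun M : 'rV_nV => M 0 c) (eigenvector_relmx relmx33_mul uA ltk').
  by rewrite mxE summxE => ->; apply: eq_bigr => t _; rewrite mxE.
have w0 : (u *m A 0) 0 c = u 0 c by rewrite -Amx_relmx // mulmx1.
move: (eq_k 0%N isT) (eq_k 1%N isT) (eq_k 2%N isT) (eq_k 3%N isT) (eq_k 4%N isT) w0.
clear eq_k uA.
rewrite !big_ord_recr !big_ord0 /= /isect /=.
case: j ltj => [|[|[|[|[|]]]]] // _; case: k ltk => [|[|[|[|[|]]]]] // _;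
  rewrite /eigmx /=; lra.
Qed.

Lemma tr_idem33 j : (idem33 j)^T = idem33 j.
Proof. exact: tr_relcomb typ33_lt typ33C _. Qed.

Lemma mul_idem33 j : (j < 5)%N -> idem33 j *m idem33 j = idem33 j.
Proof.
move=> ltj; have := relcomb_idem typ33_lt typ33C relmx33_mul (idem_coef_eigen ltj)
  (eigenrow_mul ltj) (idem_coef_norm ltj).
by [].
Qed.

Lemma relmx_mul_idem33 j k : (j < 5)%N -> (k < 5)%N ->
  A k *m idem33 j = eigmx j k *: idem33 j.
Proof.
move=> ltj ltk; have := relmx_mul_relcomb_eig typ33_lt typ33C relmx33_mul
  (idem_coef_eigen ltj) (eigenrow_mul ltj) ltk.
by [].
Qed.

Lemma sum_idem33 : \sum_(j < 5) idem33 j = 1%:M.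
Proof.
apply/matrixP => r c; rewrite summxE mxE -typ33_eq0.
under eq_bigr do rewrite (relcomb_entry typ33_lt).
have := typ33_lt r c; rewrite !big_ord_recr big_ord0 /=.
by case: (typ33 r c) => [|[|[|[|[|]]]]] // _; rewrite /idem_coef /eigmx /eigmult /=; lra.
Qed.

Lemma relmx_spectral k : (k < 5)%N -> A k = \sum_(j < 5) eigmx j k *: idem33 j.
Proof.
move=> ltk; rewrite -[LHS]mulmx1 -sum_idem33 mulmx_sumr.
by apply: eq_bigr => j _; rewrite relmx_mul_idem33.
Qed.

Lemma E0_idem33 : E0 R = idem33 0.
Proof.
apply/matrixP => r c; rewrite !mxE (relcomb_entry typ33_lt).
by have := typ33_lt r c; case: (typ33 r c) => [|[|[|[|[|]]]]] // _;
  rewrite /idem_coef /eigmx /eigmult /=; lra.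
Qed.

Lemma E1_idem33 : E1 R = idem33 1.
Proof.
rewrite /E1 Amx_relmx // (_ : -12 = eigmx 1 1) //.
have lt15 : (1 < 5)%N by [].
by have := orthoproj_eigenspace typ33_lt typ33C relmx33_mul (idem_coef_eigen lt15)
  (eigenrow_mul lt15) (idem_coef_norm lt15).
Qed.

End Scheme33.

Local Notation quad x M := ((x^T *m M *m x) 0 0).

Lemma quad_sum (R : realFieldType) n m (x : 'cV[R]_n) (a : 'I_m -> R)
    (M : 'I_m -> 'M[R]_n) :
  quad x (\sum_(j < m) a j *: M j) = \sum_(j < m) a j * quad x (M j).
Proof.
rewrite mulmx_sumr mulmx_suml summxE; apply: eq_bigr => j _.
by rewrite -scalemxAr -scalemxAl mxE.
Qed.

Lemma quad_const_mx (R : realFieldType) n (x : 'cV[R]_n) :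
  quad x (const_mx 1) = (\sum_(i < n) x i 0) ^+ 2.
Proof.
rewrite expr2 mxE mulr_sumr; apply: eq_bigr => j _; rewrite mxE; congr (_ * _).
by apply: eq_bigr => i _; rewrite !mxE mulr1.
Qed.

Section Coclique.
Variables (R : realFieldType) (S : {set part33}).
Local Notation x := (charvec R S).
Local Notation A := (relmx R typ33).

Lemma sum_charvec : \sum_(i < nV) x i 0 = #|S|%:R.
Proof.
under eq_bigr do rewrite mxE.
rewrite -natr_sum (sum_vtx (fun p => (p \in S : nat))) -sum1_card; congr (_%:R).
by rewrite [RHS]big_mkcond; apply: eq_bigr => p _; case: (p \in S).
Qed.

Lemma quad_charvec_1 : quad x 1%:M = #|S|%:R.
Proof.
rewrite mulmx1 mxE -sum_charvec; apply: eq_bigr => i _.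
by rewrite !mxE; case: (vtx i \in S); rewrite ?mulr1 ?mulr0.
Qed.

Lemma quad_charvec_idem0 : quad x (idem33 R 0) = #|S|%:R ^+ 2 / 280.
Proof. by rewrite -E0_idem33 -scalemxAr -scalemxAl mxE quad_const_mx sum_charvec mulrC. Qed.

Lemma quad_charvec_adj : independent33 S -> quad x (A 1) = 0.
Proof.
move=> /forall_inP indS; rewrite -(@Amx_relmx R 1) // mxE big1 // => j _.
rewrite [X in _ * X]mxE; case Sj: (vtx j \in S); last by rewrite mulr0.
rewrite mxE big1 ?mul0r // => i _; rewrite !mxE.
case Si: (vtx i \in S); last by rewrite mul0r.
by have /forall_inP/(_ _ Sj)/negbTE := indS _ Si; rewrite /adj33 => ->; rewrite mulr0.
Qed.

Lemma quad_relmx k : (k < 5)%N ->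
  quad x (A k) = \sum_(j < 5) eigmx R j k * quad x (idem33 R j).
Proof. by move=> ltk; rewrite {1}(relmx_spectral R ltk) quad_sum. Qed.

Lemma quad_coclique : independent33 S -> #|S| = 70%N -> forall k, (k < 5)%N ->
  quad x (A k) = eigmx R 0 k * (35 / 2) + eigmx R 1 k * (105 / 2).
Proof.
move=> indS cardS k ltk.
have q0 : quad x (idem33 R 0) = 35 / 2 by rewrite quad_charvec_idem0 cardS; lra.
have q_ge0 j : (j < 5)%N -> 0 <= quad x (idem33 R j).
  by move=> ltj; apply: quad_idem_ge0; [exact: tr_idem33 | exact: mul_idem33].
have := quad_relmx (isT : 0 < 5)%N; rewrite -(@Amx_relmx R 0) // quad_charvec_1 cardS.
have := quad_relmx (isT : 1 < 5)%N; rewrite quad_charvec_adj //.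
move: (q_ge0 1%N isT) (q_ge0 2%N isT) (q_ge0 3%N isT) (q_ge0 4%N isT).
rewrite quad_relmx // !big_ord_recr !big_ord0 /= q0.
by case: k ltk => [|[|[|[|[|]]]]] // _; rewrite /eigmx /=; lra.
Qed.

End Coclique.

Theorem mainTheorem5 (R : realFieldType) (S : {set part33}) :
  independent33 S -> #|S| = 70%N ->
  let x := charvec R S in
  \sum_(k < 5) (((x^T *m Amx R k *m x) 0 0) / (280 * (vval k)%:R)) *: Amx R k
    = 4^-1 *: 1%:M + 18^-1 *: Amx R 2 + 12^-1 *: Amx R 3 + (5 / 36) *: Amx R 4
  /\
  4^-1 *: 1%:M + 18^-1 *: Amx R 2 + 12^-1 *: Amx R 3 + (5 / 36) *: Amx R 4
    = (70 / 4) *: E0 R + (70 / 36) *: E1 R.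
Proof.
move=> indS cardS x.
have A0 : 1%:M = relmx R typ33 0 := @Amx_relmx R 0 isT.
rewrite A0 !Amx_relmx // E0_idem33 E1_idem33.
under eq_bigr => k _ do
  rewrite Amx_relmx ?ltn_ord // (quad_coclique R indS cardS (ltn_ord k)).
split; apply/matrixP => r c; rewrite !mxE ?summxE !big_ord_recr !big_ord0 !mxE /=.
all: have := typ33_lt r c; case: (typ33 r c) => [|[|[|[|[|]]]]] // _.
all: rewrite /idem_coef /eigmx /eigmult /vval /=; lra.
Qed.
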